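(* Let $X$ be a random variable with values in $[0,C]$, $r:[0,C]\to[E,D]$ measurable with $E\le0\le D$, $\lambda>0$, and let $c^*$ be the unique root on $\mathbb{R}_+$ of $\Phi(c)=\lambda\,\mathbb{E}[(r(X)-cX)_+]-c$. Let $\mathcal{E}\subset\{x\in[0,C]: r(x)\le c^*x\}$ be any (measurable) set, and define $r_{\mathcal E}(x)=r(x)\mathbf 1(x\notin\mathcal E)$. Then the profitability threshold associated with $r_{\mathcal E}$, i.e. the unique root on $\mathbb{R}_+$ of $c\mapsto\lambda\mathbb{E}[(r_{\mathcal E}(X)-cX)_+]-c$, equals $c^*$; equivalently, $$c^*=\lambda\,\mathbb{E}\big[(r_{\mathcal E}(X)-c^*X)_+\big].$$
   Context: $(z)_+=\max\{z,0\}$. *)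

From HB Require Import structures.
From mathcomp Require Import all_boot all_order all_algebra.
From mathcomp Require Import all_classical all_reals all_analysis.
Set Implicit Arguments. Unset Strict Implicit. Unset Printing Implicit Defensive.
Import Order.TTheory GRing.Theory Num.Theory.
Local Open Scope ring_scope.

Definition pospart {R : realType} (z : R) : R := Num.max z 0.

Definition Phi {d} {T : measurableType d} {R : realType} (P : probability T R)
  (X : T -> R) (r : R -> R) (lam c : R) : \bar R :=
  (lam%:E * 'E_P[fun w => pospart (r (X w) - c * X w)] - c%:E)%E.

Definition r_restr {R : realType} (r : R -> R) (Ecal : set R) (x : R) : R :=
  r x * \1_(~` Ecal) x.

(* At c = c* the truncation changes nothing inside the expectation: on E both
   (r(x) - c* x)_+ and (0 - c* x)_+ vanish, since r(x) <= c* x and c* x >= 0.  So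
   c* is still a root of the new Phi.  Roots of c |-> lam S(c) - c are unique
   whenever S >= 0 is nonincreasing, as is S(c) = E[(r_E(X) - cX)_+] for X >= 0:
   a root satisfies S(c) = c / lam, so a <= b forces b / lam <= a / lam. *)
From HB Require Import structures.
From mathcomp Require Import all_boot all_order all_algebra.
From mathcomp Require Import all_classical all_reals all_analysis.
Import Order.TTheory GRing.Theory Num.Theory.
Local Open Scope classical_set_scope.
Local Open Scope ring_scope.

Section pospart.
Variable R : realType.
Implicit Types a b : R.

Lemma pospart_ge0 a : 0 <= pospart a.
Proof. by rewrite /pospart le_max lexx orbT. Qed.

Lemma le_pospart a b : a <= b -> pospart a <= pospart b.
Proof. by move=> ab; rewrite /pospart ge_max !le_max ab lexx !orbT. Qed.

Lemma pospart_eq0 a : a <= 0 -> pospart a = 0.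
Proof. by move=> a0; rewrite /pospart max_r. Qed.

End pospart.

(* Unlike [ge0_le_integral], no measurability is needed: both sides are
   suprema over the simple functions below the integrand. *)
Lemma ge0_le_integralT d (T : measurableType d) (R : realType)
    (mu : {measure set T -> \bar R}) (f g : T -> \bar R) :
  (forall x, 0 <= f x)%E -> (forall x, f x <= g x)%E ->
  (\int[mu]_x f x <= \int[mu]_x g x)%E.
Proof.
move=> f0 fg; rewrite !ge0_integralTE//; last by move=> x; exact: le_trans (f0 x) (fg x).
by apply: ereal_sup_le => _ [h hf <-]; exists h => //= x; exact: le_trans (hf x) (fg x).
Qed.

Definition surplus {d} {T : measurableType d} {R : realType} (P : probability T R)
    (X : T -> R) (r : R -> R) (c : R) : \bar R :=
  'E_P[fun w => pospart (r (X w) - c * X w)].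

Lemma PhiE {d} {T : measurableType d} {R : realType} (P : probability T R)
    (X : T -> R) (r : R -> R) (lam c : R) :
  Phi P X r lam c = (lam%:E * surplus P X r c - c%:E)%E.
Proof. by []. Qed.

Lemma mule_sube_eq0 (R : realType) (lam c : R) (y : \bar R) : 0 < lam -> (0 <= y)%E ->
  (lam%:E * y - c%:E = 0)%E -> y = (c / lam)%:E.
Proof.
move=> lam0; case: y => [y| |] _ //=.
  move=> /eqP; rewrite -EFinM -EFinB eqe subr_eq0 => /eqP <-.
  by rewrite [lam * y]mulrC mulfK ?gt_eqF.
by rewrite gt0_muley ?lte_fin.
Qed.

Section surplus.
Context {d} {T : measurableType d} {R : realType} {P : probability T R}.
Context {X : T -> R} {r : R -> R}.
Hypothesis X_ge0 : forall w, 0 <= X w.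

Lemma surplus_ge0 c : (0 <= surplus P X r c)%E.
Proof. by apply: expectation_ge0 => w; exact: pospart_ge0. Qed.

Lemma surplus_nonincr {a b : R} : a <= b -> (surplus P X r b <= surplus P X r a)%E.
Proof.
move=> ab; rewrite /surplus unlock; apply: ge0_le_integralT => w.
  by rewrite lee_fin pospart_ge0.
by rewrite lee_fin le_pospart// lerB// ler_wpM2r.
Qed.

Lemma surplus_r_restr (Ecal : set R) c : 0 <= c ->
    Ecal `<=` [set x | r x <= c * x] ->
  surplus P X (r_restr r Ecal) c = surplus P X r c.
Proof.
move=> c0 EcalS; rewrite /surplus unlock; apply: eq_integral => w _.
congr (_ %:E); rewrite /r_restr /indic.
have [/[dup] Xw /EcalS rXw|Xw] := pselect (Ecal (X w)); last by rewrite mem_set ?mulr1.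
rewrite memNset ?mulr0 ?sub0r; last by move=> /(_ Xw).
by rewrite !pospart_eq0 ?subr_le0// oppr_le0 mulr_ge0.
Qed.

Lemma Phi_root_unique {lam a b : R} : 0 < lam ->
  Phi P X r lam a = 0%E -> Phi P X r lam b = 0%E -> a = b.
Proof.
move=> lam0.
have root_surplus c : Phi P X r lam c = 0%E -> surplus P X r c = (c / lam)%:E.
  by rewrite PhiE; apply: mule_sube_eq0 => //; exact: surplus_ge0.
wlog ab : a b / a <= b.
  by move=> wlog_ab Pa Pb; have [/wlog_ab|/ltW/wlog_ab] := leP a b; [exact|move=> ->].
move=> /root_surplus Sa /root_surplus Sb; apply/le_anti; rewrite ab /=.
have := surplus_nonincr ab; rewrite Sa Sb lee_fin.
by rewrite ler_pM2r// invr_gt0.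
Qed.

End surplus.

Theorem lemma4p2 (d : measure_display) (T : measurableType d) (R : realType)
  (P : probability T R) (X : T -> R) (C E D lam cstar : R) (r : R -> R)
  (Ecal : set R) :
  measurable_fun setT X ->
  (forall w, 0 <= X w <= C) ->
  measurable_fun `[0, C] r ->
  (forall x, 0 <= x <= C -> E <= r x <= D) ->
  E <= 0 -> 0 <= D ->
  0 < lam ->
  0 <= cstar ->
  Phi P X r lam cstar = 0%E ->
  (forall c, 0 <= c -> Phi P X r lam c = 0%E -> c = cstar) ->
  measurable Ecal ->
  Ecal `<=` [set x | 0 <= x <= C /\ r x <= cstar * x] ->
  forall c, 0 <= c -> (Phi P X (r_restr r Ecal) lam c = 0%E <-> c = cstar).
Proof.
move=> _ X0C _ _ _ _ lam0 cstar0 Phi_cstar _ _ EcalS c _.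
have X_ge0 w : 0 <= X w by case/andP: (X0C w).
have restr_cstar : Phi P X (r_restr r Ecal) lam cstar = Phi P X r lam cstar.
  by rewrite !PhiE surplus_r_restr// => x /EcalS[_].
rewrite Phi_cstar in restr_cstar; split=> [Phi_c|->//].
exact: (Phi_root_unique X_ge0 lam0 Phi_c restr_cstar).
Qed.
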